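(* For every $b,b'\in\mathbb R$ and all $p,q\in\Delta_d$, \[ \ell^\Theta_{\mathrm C}(L_bp,L_{b'}q)\le\ell^\Theta_{\mathrm C}(p,q)+\Delta^{-1/2}|b-b'|. \]
   Context: $\Theta=\{\theta_1<\dots<\theta_d\}$ with constant stride $\Delta>0$; $\Delta_d$ the probability simplex of $\mathbb R^d$. For $u\in\Delta_d$, $\eta^{u,0}:=\sum_ku_k\delta_{\theta_k}$. Categorical projection $\Pi^\Theta_{\mathrm C}$: $\delta_x\mapsto\delta_{\theta_1}$ if $x\le\theta_1$, $\delta_{\theta_d}$ if $x\ge\theta_d$, $\frac{\theta_{k+1}-x}{\Delta}\delta_{\theta_k}+\frac{x-\theta_k}{\Delta}\delta_{\theta_{k+1}}$ if $\theta_k\le x\le\theta_{k+1}$, extended linearly to laws. For $b\in\mathbb R$, $L_b:\Delta_d\to\Delta_d$ is defined by $\Pi^\Theta_{\mathrm C}(\text{law of }X+b,\ X\sim\eta^{u,0})=\eta^{L_bu,0}$. Coordinate Cramér metric: $F_u(\theta_k):=\sum_{j\le k}u_j$, $\ell^\Theta_{\mathrm C}(u,v)^2:=\Delta\sum_{k=1}^{d-1}(F_u(\theta_k)-F_v(\theta_k))^2$. *)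

(* Reals are modelled by an arbitrary real closed field R
   (the statement is purely algebraic; the real numbers are an instance). *)
From HB Require Import structures.
From mathcomp Require Import all_boot all_order all_algebra.
Set Implicit Arguments. Unset Strict Implicit. Unset Printing Implicit Defensive.
Import Order.TTheory GRing.Theory Num.Theory.
Local Open Scope ring_scope.

(* Grid Theta = {theta_1 < ... < theta_d}, 0-indexed here:
   atom k (k = 0 .. d-1) is  theta k = theta1 + k * Delta. *)
Definition theta (R : rcfType) (theta1 Delta : R) (k : nat) : R :=
  theta1 + k%:R * Delta.

Definition simplex (R : rcfType) (d : nat) (u : 'I_d -> R) : Prop :=
  (forall k, 0 <= u k) /\ \sum_(k < d) u k = 1.

Definition cproj_dirac (R : rcfType) (d : nat) (theta1 Delta : R)
    (x : R) (j : nat) : R :=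
  let th := theta theta1 Delta in
  if x <= th 0%N then (j == 0%N)%:R
  else if th d.-1 <= x then (j == d.-1)%:R
  else if (th j <= x) && (x <= th j.+1) then (th j.+1 - x) / Delta
  else if (0 < j)%N && (th j.-1 <= x) && (x <= th j) then (x - th j.-1) / Delta
  else 0.

(* L_b u : coordinates of Pi_C(law of X + b), X ~ sum_k u_k delta_{theta_k},
   i.e. the linear extension of the projection applied to
   sum_k u_k delta_{theta_k + b}. *)
Definition Lb (R : rcfType) (d : nat) (theta1 Delta b : R) (u : 'I_d -> R)
    : 'I_d -> R :=
  fun j => \sum_(k < d) u k * cproj_dirac d theta1 Delta (theta theta1 Delta k + b) j.

Definition cdf (R : rcfType) (d : nat) (u : 'I_d -> R) (k : nat) : R :=
  \sum_(j < d | (j <= k)%N) u j.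

Definition cramer (R : rcfType) (d : nat) (Delta : R) (u v : 'I_d -> R) : R :=
  Num.sqrt (Delta * \sum_(k < d.-1) (cdf u k - cdf v k) ^+ 2).

(* Put x := b / Delta and clamp t := min (1, max (0, t)).  For k < d - 1 the
   CDF of L_b u at theta_k is sum_i u_i clamp (k + 1 - i - x).  By Minkowski's
   inequality it suffices to bound l (L_b p, L_b q) and l (L_b q, L_b' q).
   Summation by parts gives F_{L_b p} - F_{L_b q} = W (F_p - F_q) with
   W k i = clamp (k + 1 - i - x) - clamp (k - i - x) >= 0, whose rows and
   columns telescope to sums at most 1, so W is an l2 contraction (Jensen).
   For the shift, for each i the l1 distance over k between clamp (k + 1 - i - x)
   and clamp (k + 1 - i - x') is at most |x - x'|, so F_{L_b q} - F_{L_b' q}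
   has l1, hence l2, norm at most |b - b'| / Delta. *)

From mathcomp Require Import all_boot all_order all_algebra.
From mathcomp Require Import ring lra.
Set Implicit Arguments. Unset Strict Implicit. Unset Printing Implicit Defensive.
Import Order.TTheory GRing.Theory Num.Theory.
Local Open Scope ring_scope.

Section SumsOfSquares.
Variable R : realFieldType.

Lemma cauchy_schwarz (m : nat) (w x y : 'I_m -> R) : (forall i, 0 <= w i) ->
  (\sum_i w i * x i * y i) ^+ 2
    <= (\sum_i w i * x i ^+ 2) * (\sum_i w i * y i ^+ 2).
Proof.
move=> w_ge0.
set A := \sum_i w i * x i ^+ 2; set B := \sum_i w i * y i ^+ 2.
set C := \sum_i w i * x i * y i.
have B_ge0 : 0 <= B by apply: sumr_ge0 => i _; rewrite mulr_ge0 ?sqr_ge0.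
have quad_ge0 t : 0 <= A - 2 * t * C + t ^+ 2 * B.
  have -> : A - 2 * t * C + t ^+ 2 * B = \sum_i w i * (x i - t * y i) ^+ 2.
    rewrite /A /B /C !mulr_sumr -sumrN -!big_split /=.
    by apply: eq_bigr => i _; ring.
  by apply: sumr_ge0 => i _; rewrite mulr_ge0 ?sqr_ge0.
have [B0 | B_neq0] := eqVneq B 0.
  have [-> | C_neq0] := eqVneq C 0; first by rewrite B0 expr0n mulr0.
  have := quad_ge0 ((A + 1) / (2 * C)).
  have -> : A - 2 * ((A + 1) / (2 * C)) * C + ((A + 1) / (2 * C)) ^+ 2 * B = -1.
    by rewrite B0; field.
  by rewrite ler0N1.
have B_gt0 : 0 < B by rewrite lt_def B_neq0.
have := mulr_ge0 (quad_ge0 (C / B)) (ltW B_gt0).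
have -> : (A - 2 * (C / B) * C + (C / B) ^+ 2 * B) * B = A * B - C ^+ 2 by field.
by rewrite subr_ge0.
Qed.

Lemma jensen_sqr (m : nat) (w x : 'I_m -> R) :
  (forall i, 0 <= w i) -> \sum_i w i <= 1 ->
  (\sum_i w i * x i) ^+ 2 <= \sum_i w i * x i ^+ 2.
Proof.
move=> w_ge0 w_le1; have := cauchy_schwarz x (fun=> 1) w_ge0.
under eq_bigr do rewrite mulr1; under [X in _ * X]eq_bigr do rewrite expr1n mulr1.
move/le_trans; apply; apply: ler_piMr w_le1.
by apply: sumr_ge0 => i _; rewrite mulr_ge0 ?sqr_ge0.
Qed.

Lemma substochastic_sum_sqr_le (m n : nat) (W : 'I_m -> 'I_n -> R)
    (x : 'I_n -> R) :
  (forall k i, 0 <= W k i) ->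
  (forall k, \sum_i W k i <= 1) -> (forall i, \sum_k W k i <= 1) ->
  \sum_k (\sum_i W k i * x i) ^+ 2 <= \sum_i x i ^+ 2.
Proof.
move=> W_ge0 row_le1 col_le1.
apply: (@le_trans _ _ (\sum_k \sum_i W k i * x i ^+ 2)).
  by apply: ler_sum => k _; apply: jensen_sqr.
rewrite exchange_big /=; apply: ler_sum => i _.
by rewrite -mulr_suml ler_piMl ?sqr_ge0.
Qed.

Lemma sum_sqr_le_sqr_sum_norm (m : nat) (y : 'I_m -> R) :
  \sum_i y i ^+ 2 <= (\sum_i `|y i|) ^+ 2.
Proof.
elim: m y => [|m IH] y; first by rewrite !big_ord0 expr0n.
rewrite !big_ord_recr /=; set a := y ord_max.
have := IH (fun i => y (widen_ord (leqnSn m) i)).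
have : 0 <= \sum_(i < m) `|y (widen_ord (leqnSn m) i)| by apply: sumr_ge0.
have := real_normK (num_real a); have := normr_ge0 a.
nra.
Qed.
End SumsOfSquares.

Lemma minkowski (R : rcfType) (m : nat) (w x y : 'I_m -> R) :
  (forall i, 0 <= w i) ->
  Num.sqrt (\sum_i w i * (x i + y i) ^+ 2)
    <= Num.sqrt (\sum_i w i * x i ^+ 2) + Num.sqrt (\sum_i w i * y i ^+ 2).
Proof.
move=> w_ge0.
set A := \sum_i w i * x i ^+ 2; set B := \sum_i w i * y i ^+ 2.
set C := \sum_i w i * x i * y i.
have A_ge0 : 0 <= A by apply: sumr_ge0 => i _; rewrite mulr_ge0 ?sqr_ge0.
have B_ge0 : 0 <= B by apply: sumr_ge0 => i _; rewrite mulr_ge0 ?sqr_ge0.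
have -> : \sum_i w i * (x i + y i) ^+ 2 = A + 2 * C + B.
  rewrite /A /B /C !mulr_sumr -!big_split /=.
  by apply: eq_bigr => i _; ring.
have C_le : C <= Num.sqrt A * Num.sqrt B.
  rewrite -sqrtrM // (le_trans (ler_norm C)) // -sqrtr_sqr.
  by rewrite ler_sqrt ?mulr_ge0 ?cauchy_schwarz.
rewrite -[X in _ <= X]ger0_norm ?addr_ge0 ?sqrtr_ge0 // -sqrtr_sqr.
by rewrite ler_sqrt ?sqr_ge0 // sqrrD !sqr_sqrtr //; lra.
Qed.

Lemma summation_by_parts (R : comPzRingType) (n : nat) (e f : nat -> R) :
  \sum_(i < n.+1) e i * f i =
  \sum_(i < n) (\sum_(j < i.+1) e j) * (f i - f i.+1)
    + (\sum_(j < n.+1) e j) * f n.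
Proof.
elim: n => [|n IH]; first by rewrite big_ord0 !big_ord1 add0r.
rewrite big_ord_recr /= IH [in RHS]big_ord_recr /=.
by rewrite [\sum_(j < n.+2) e j]big_ord_recr /=; ring.
Qed.

Lemma telescope_sumr_ord (V : zmodType) (n : nat) (g : nat -> V) :
  \sum_(i < n) (g i - g i.+1) = g 0%N - g n.
Proof.
under eq_bigr do rewrite -opprB.
by rewrite sumrN -(big_mkord xpredT (fun i => g i.+1 - g i)) telescope_sumr // opprB.
Qed.

Ltac case_ler :=
  repeat (match goal with
          | |- context [if (?a <= ?b)%R then _ else _] => case: (lerP a b) => ?
          end
       || match goal with |- context [(?a <= ?b)%R] => case: (lerP a b) => ? /= end).

Section Clamp.
Variable R : realFieldType.

Definition clamp (M t : R) : R := if t <= 0 then 0 else if M <= t then M else t.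

Lemma clamp_ge0 (M t : R) : 0 <= M -> 0 <= clamp M t.
Proof. by rewrite /clamp; case: (lerP t 0) => ?; case: (lerP M t) => ? ?; lra. Qed.

Lemma clamp_le (M t : R) : 0 <= M -> clamp M t <= M.
Proof. by rewrite /clamp; case: (lerP t 0) => ?; case: (lerP M t) => ? ?; lra. Qed.

Lemma clamp1B_le1 (s t : R) : clamp 1 t - clamp 1 s <= 1.
Proof. by have := clamp_le t ler01; have := clamp_ge0 s ler01; lra. Qed.

Lemma le_clamp (M s t : R) : 0 <= M -> s <= t -> clamp M s <= clamp M t.
Proof.
rewrite /clamp => ? ?; case: (lerP t 0) => ?; case: (lerP M t) => ?;
  case: (lerP s 0) => ?; case: (lerP M s) => ?; lra.
Qed.

Lemma clampB_le (M s t : R) : 0 <= M -> s <= t -> clamp M t - clamp M s <= t - s.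
Proof.
rewrite /clamp => ? ?; case: (lerP t 0) => ?; case: (lerP M t) => ?;
  case: (lerP s 0) => ?; case: (lerP M s) => ?; lra.
Qed.

Lemma sum_clamp1_shift (N : nat) (u : R) :
  \sum_(k < N) clamp 1 (u + k%:R) = clamp N%:R (u + N%:R - 1).
Proof.
elim: N => [|N IH].
  by rewrite big_ord0 /clamp mulr0n; case: (lerP (u + 0 - 1) 0) => ? //; rewrite ltW.
have N_ge0 := ler0n R N.
by rewrite big_ord_recr /= IH -natr1 /clamp; case_ler; lra.
Qed.

Lemma sum_dist_clamp1_shift (N : nat) (u v : R) :
  \sum_(k < N) `|clamp 1 (u + k%:R) - clamp 1 (v + k%:R)| <= `|u - v|.
Proof.
wlog le_vu : u v / v <= u.
  move=> hwlog; case/orP: (le_total v u) => [/hwlog // | /hwlog].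
  by rewrite distrC; under eq_bigr do rewrite distrC.
rewrite ger0_norm ?subr_ge0 //.
rewrite (eq_bigr (fun k : 'I_N => clamp 1 (u + k%:R) - clamp 1 (v + k%:R))).
  rewrite sumrB !sum_clamp1_shift (le_trans (clampB_le (ler0n _ _) _)) ?lerD2r //.
  lra.
by move=> k _; rewrite ger0_norm // subr_ge0 le_clamp ?lerD2r.
Qed.
End Clamp.

Section CategoricalProjection.
Variables (R : rcfType) (theta1 Delta : R).
Hypothesis Delta_gt0 : 0 < Delta.

Let ler_theta m s : (theta theta1 Delta m <= theta1 + s * Delta) = (m%:R <= s).
Proof. by rewrite /theta lerD2l ler_pM2r. Qed.

Let ger_theta m s : (theta1 + s * Delta <= theta theta1 Delta m) = (s <= m%:R).
Proof. by rewrite /theta lerD2l ler_pM2r. Qed.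

Let theta_subr_div m s :
  (theta theta1 Delta m - (theta1 + s * Delta)) / Delta = m%:R - s.
Proof. by rewrite /theta; field; rewrite gt_eqF. Qed.

Let subr_theta_div m s :
  (theta1 + s * Delta - theta theta1 Delta m) / Delta = s - m%:R.
Proof. by rewrite /theta; field; rewrite gt_eqF. Qed.

Lemma cproj_dirac0 (n : nat) (s : R) : (0 < n)%N ->
  cproj_dirac n.+1 theta1 Delta (theta1 + s * Delta) 0 = clamp 1 (1 - s).
Proof.
case: n => // n _; rewrite /cproj_dirac /= !ler_theta !ger_theta theta_subr_div.
have n_ge0 := ler0n R n; rewrite /clamp -natr1; case_ler; lra.
Qed.

Lemma cproj_diracS (n j : nat) (s : R) : (j.+1 < n)%N ->
  cproj_dirac n.+1 theta1 Delta (theta1 + s * Delta) j.+1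
    = clamp 1 (j.+2%:R - s) - clamp 1 (j.+1%:R - s).
Proof.
move=> lt_jn; rewrite /cproj_dirac /= !ler_theta !ger_theta.
rewrite theta_subr_div subr_theta_div (ltn_eqF lt_jn) mulr0n.
have : j.+2%:R <= n%:R :> R by rewrite ler_nat.
rewrite -!natr1 => le_jn; have j_ge0 := ler0n R j.
rewrite /clamp; case_ler; lra.
Qed.

Lemma cdf_cproj_dirac (n k : nat) (s : R) : (k < n)%N ->
  \sum_(j < k.+1) cproj_dirac n.+1 theta1 Delta (theta1 + s * Delta) j
    = clamp 1 (k.+1%:R - s).
Proof.
elim: k => [|k IH] lt_kn; first by rewrite big_ord1 cproj_dirac0.
by rewrite big_ord_recr /= IH ?(ltnW lt_kn) // cproj_diracS //; ring.
Qed.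

Lemma cdf_Lb (n : nat) (b : R) (u : 'I_n.+1 -> R) (k : nat) : (k < n)%N ->
  cdf (Lb theta1 Delta b u) k
    = \sum_i u i * clamp 1 (k.+1%:R - i%:R - b / Delta).
Proof.
move=> lt_kn; rewrite /cdf /Lb exchange_big /=; apply: eq_bigr => i _.
rewrite -mulr_sumr; congr (_ * _).
have -> : theta theta1 Delta i + b = theta1 + (i%:R + b / Delta) * Delta.
  by rewrite /theta; field; rewrite gt_eqF.
rewrite (eq_bigl (fun j : 'I_n.+1 => (j < k.+1)%N)) //.
by rewrite -(@big_ord_widen _ _ _ k.+1 n.+1 _ (ltnW lt_kn)) cdf_cproj_dirac // opprD addrA.
Qed.
End CategoricalProjection.

Lemma cdfE (R : rcfType) (n : nat) (u : 'I_n.+1 -> R) (k : nat) : (k < n.+1)%N ->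
  cdf u k = \sum_(j < k.+1) u (inord j).
Proof.
move=> lt_kn; rewrite (big_ord_widen _ (fun j => u (inord j)) lt_kn).
by apply: eq_big => // j _; rewrite inord_val.
Qed.

Lemma cramer_triangle (R : rcfType) (d : nat) (Delta : R) (u v w : 'I_d -> R) :
  0 <= Delta -> cramer Delta u w <= cramer Delta u v + cramer Delta v w.
Proof.
move=> Delta_ge0; rewrite /cramer !mulr_sumr.
have := minkowski (fun k : 'I_d.-1 => cdf u k - cdf v k)
  (fun k => cdf v k - cdf w k) (fun=> Delta_ge0).
by under eq_bigr do rewrite addrA subrK.
Qed.

Section CramerLb.
Variables (R : rcfType) (theta1 Delta : R).
Hypothesis Delta_gt0 : 0 < Delta.

Lemma cramer_Lb_contraction (n : nat) (b : R) (p q : 'I_n.+1 -> R) :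
  \sum_i p i = \sum_i q i ->
  cramer Delta (Lb theta1 Delta b p) (Lb theta1 Delta b q) <= cramer Delta p q.
Proof.
move=> mass_eq; rewrite /cramer ler_sqrt; last first.
  by rewrite mulr_ge0 ?(ltW Delta_gt0) //; apply: sumr_ge0 => k _; rewrite sqr_ge0.
rewrite ler_pM2l //=.
pose f (k i : nat) := clamp 1 (k.+1%:R - i%:R - b / Delta).
pose W (k i : nat) := f k i - f k i.+1.
have LbB_cdf k : (k < n)%N ->
    cdf (Lb theta1 Delta b p) k - cdf (Lb theta1 Delta b q) k
      = \sum_(i < n) W k i * (cdf p i - cdf q i).
  move=> lt_kn; rewrite !cdf_Lb // -sumrB.
  rewrite (eq_bigr (fun i : 'I_n.+1 => (p (inord i) - q (inord i)) * f k i));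
    last by move=> i _; rewrite inord_val mulrBl.
  rewrite (summation_by_parts n (fun i => p (inord i) - q (inord i)) (f k)) sumrB.
  have sum_inord (u : 'I_n.+1 -> R) : \sum_(i < n.+1) u (inord i) = \sum_i u i.
    by apply: eq_bigr => i _; rewrite inord_val.
  rewrite !sum_inord mass_eq subrr mul0r addr0; apply: eq_bigr => i _.
  have lt_in : (i < n.+1)%N := ltnW (ltn_ord i).
  by rewrite mulrC sumrB !cdfE.
rewrite (eq_bigr (fun k : 'I_n => (\sum_(i < n) W k i * (cdf p i - cdf q i)) ^+ 2));
  last by move=> k _; rewrite LbB_cdf.
apply: substochastic_sum_sqr_le => [k i | k | i].
- by rewrite subr_ge0 le_clamp // lerD2r lerD2l lerN2 ler_nat.
- by rewrite telescope_sumr_ord clamp1B_le1.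
- pose g (k : nat) := clamp 1 (k%:R - i%:R - b / Delta).
  rewrite (eq_bigr (fun k : 'I_n => g k.+1 - g k)) => [|k _]; last first.
    have shift : k.+1%:R - i.+1%:R = k%:R - i%:R :> R by rewrite -!natr1; ring.
    by rewrite /W /f /g shift.
  rewrite -(big_mkord xpredT (fun k => g k.+1 - g k)) telescope_sumr //.
  exact: clamp1B_le1.
Qed.

Lemma cramer_Lb_shift (n : nat) (b b' : R) (q : 'I_n.+1 -> R) :
  (forall i, 0 <= q i) -> \sum_i q i = 1 ->
  cramer Delta (Lb theta1 Delta b q) (Lb theta1 Delta b' q)
    <= `|b - b'| / Num.sqrt Delta.
Proof.
move=> q_ge0 q_mass; set delta := `|b - b'| / Delta.
have delta_ge0 : 0 <= delta by rewrite divr_ge0 // ltW.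
pose B (k : 'I_n) := cdf (Lb theta1 Delta b q) k - cdf (Lb theta1 Delta b' q) k.
pose f c (k i : nat) := clamp 1 (k.+1%:R - i%:R - c / Delta).
have B_l1 : \sum_k `|B k| <= delta.
  apply: (@le_trans _ _ (\sum_(k < n) \sum_(i < n.+1) q i * `|f b k i - f b' k i|)).
    apply: ler_sum => k _; rewrite /B !cdf_Lb // -sumrB.
    apply: le_trans (ler_norm_sum _ _ _) _; apply: ler_sum => i _.
    by rewrite -mulrBr normrM ger0_norm.
  rewrite exchange_big /= -[delta]mul1r -q_mass mulr_suml.
  apply: ler_sum => i _; rewrite -mulr_sumr ler_wpM2l //.
  have := sum_dist_clamp1_shift n (1 - i%:R - b / Delta) (1 - i%:R - b' / Delta).
  have shift c (k : nat) : 1 - i%:R - c / Delta + k%:R = k.+1%:R - i%:R - c / Delta.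
    by rewrite -natr1; ring.
  under eq_bigr do rewrite !shift.
  have -> : 1 - i%:R - b / Delta - (1 - i%:R - b' / Delta) = (b' - b) / Delta.
    by field; rewrite gt_eqF.
  by move=> /le_trans; apply; rewrite normrM normfV (gtr0_norm Delta_gt0) distrC.
have B_l2 : \sum_k B k ^+ 2 <= delta ^+ 2.
  have B_l1_ge0 : 0 <= \sum_k `|B k| by apply: sumr_ge0.
  by apply: le_trans (sum_sqr_le_sqr_sum_norm B) _; rewrite ler_sqr ?nnegrE.
rewrite /cramer (@le_trans _ _ (Num.sqrt (Delta * delta ^+ 2))) //.
  by rewrite ler_sqrt ?ler_pM2l // mulr_ge0 ?sqr_ge0 // ltW.
suff -> : Num.sqrt (Delta * delta ^+ 2) = `|b - b'| / Num.sqrt Delta by [].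
have sqrtD_neq0 : Num.sqrt Delta != 0 by rewrite gt_eqF ?sqrtr_gt0.
rewrite sqrtrM ?(ltW Delta_gt0) // sqrtr_sqr ger0_norm // /delta.
by rewrite -{2}(sqr_sqrtr (ltW Delta_gt0)); field.
Qed.
End CramerLb.

Theorem lemma6 (R : rcfType) (d : nat) (hd : (0 < d)%N) (theta1 Delta : R)
    (hDelta : 0 < Delta) (b b' : R) (p q : 'I_d -> R)
    (hp : simplex p) (hq : simplex q) :
  cramer Delta (Lb theta1 Delta b p) (Lb theta1 Delta b' q)
    <= cramer Delta p q + `|b - b'| / Num.sqrt Delta.
Proof.
case: d hd p q hp hq => [//|n] _ p q [_ p_mass] [q_ge0 q_mass].
apply: le_trans (cramer_triangle _ (Lb theta1 Delta b q) _ (ltW hDelta)) _.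
apply: lerD; last exact: cramer_Lb_shift.
by apply: cramer_Lb_contraction; rewrite // p_mass q_mass.
Qed.
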